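(* Let $G$ and $H$ be connected graphs with $|V(G)|\ge 3$ and $|V(H)|\ge 2$, such that at least one of $G$, $H$ is not complete. Then $$rx_3(G[H])\le rx_3(G)+rc(H).$$ In particular, if $\mathrm{diam}(G)=rx_3(G)$ and $H$ is complete, then $rx_3(G[H])=rx_3(G)+rc(H)$.
   Context: The lexicographic product $G[H]$ has vertex set $V(G)\times V(H)$, with $(g_1,h_1)$ and $(g_2,h_2)$ adjacent iff $g_1g_2\in E(G)$, or $g_1=g_2$ and $h_1h_2\in E(H)$. An edge coloring may give adjacent edges the same color. A path (tree) is rainbow if its edges have pairwise distinct colors. The rainbow connection number $rc(H)$ of a connected graph $H$ is the minimum number of colors in an edge coloring such that every two distinct vertices are joined by a rainbow path. For a connected graph on at least $3$ vertices, $rx_3$ is the minimum number of colors in an edge coloring such that every set of $3$ vertices lies in some rainbow tree. $\mathrm{diam}(G)$ is the diameter of $G$. *)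

From mathcomp Require Import all_boot.
Set Implicit Arguments. Unset Strict Implicit. Unset Printing Implicit Defensive.

Section Graphs.
Variable T : finType.
Implicit Types (g : rel T).

Definition simple_graph g := symmetric g /\ irreflexive g.
Definition connected_graph g := forall x y : T, connect g x y.
Definition complete_graph g := forall x y : T, x != y -> g x y.

(* An edge colouring with (at most) k colours: a colour c x y = c y x < k
   assigned to every edge xy (adjacent edges may share a colour). *)
Definition edge_coloring g (k : nat) (c : T -> T -> nat) :=
  forall x y, g x y -> c x y = c y x /\ c x y < k.

Definition rainbow_path g (c : T -> T -> nat) (x y : T) (p : seq T) :=
  [/\ path g x p, uniq (x :: p), last x p = y & uniq (pairmap c x p)].

(* A rainbow tree containing S: a list of edges es of g (stored as ordered
   pairs) with pairwise distinct colours (hence pairwise distinct as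
   unordered edges), whose spanned subgraph (vertex set = endpoints) is
   connected with #edges = #vertices - 1 (i.e. a tree), and whose vertex
   set contains S. *)
Definition tree_vertices (es : seq (T * T)) : {set T} :=
  [set x | has (fun e : T * T => (e.1 == x) || (e.2 == x)) es].
Definition tree_rel (es : seq (T * T)) : rel T :=
  fun x y => ((x, y) \in es) || ((y, x) \in es).
Definition rainbow_tree g (c : T -> T -> nat) (S : {set T}) (es : seq (T * T)) :=
  [/\ all (fun e : T * T => g e.1 e.2) es,
      uniq (map (fun e : T * T => c e.1 e.2) es),
      {in tree_vertices es &, forall x y, connect (tree_rel es) x y},
      size es = #|tree_vertices es| - 1
    & S \subset tree_vertices es].

Definition rainbow_connecting g k :=
  exists c, edge_coloring g k c /\
    forall x y : T, x != y -> exists p, rainbow_path g c x y p.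

Definition rainbow_3_connecting g k :=
  exists c, edge_coloring g k c /\
    forall S : {set T}, #|S| = 3 -> exists es, rainbow_tree g c S es.

Definition is_rc g k :=
  rainbow_connecting g k /\ forall k', rainbow_connecting g k' -> k <= k'.
Definition is_rx3 g k :=
  rainbow_3_connecting g k /\ forall k', rainbow_3_connecting g k' -> k <= k'.

Definition is_diam g d :=
  (forall x y : T, exists p, [/\ path g x p, last x p = y & size p <= d]) /\
  exists x y : T, forall p, path g x p -> last x p = y -> d <= size p.
End Graphs.

Definition lexprod (T U : finType) (g : rel T) (h : rel U) : rel (T * U) :=
  fun u v => g u.1 v.1 || ((u.1 == v.1) && h u.2 v.2).

From mathcomp Require Import all_boot zify.
Set Implicit Arguments. Unset Strict Implicit. Unset Printing Implicit Defensive.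

(* From a rainbow 3-connecting colouring cG of G (a colours) and
   a rainbow connecting colouring cH of H (b colours) we colour G[H] by
   lex_color: an edge inside a fibre {x} x V(H) gets a + cH, an edge between
   two fibres gets the colour of its projection in G, or another colour of G
   when both ends have the same H-coordinate.  A rainbow tree through three
   vertices is grown from a root (rooted_tree, rooted_tree_attach): a rainbow
   path of H inside one fibre, followed by "zigzag" lifts of rainbow walks of
   G read off a rainbow tree of G -- a rainbow path when two of the vertices
   share a fibre, a rainbow spider (rainbow_tree_spider) when all fibres
   differ.  Lifted edges use colours below a, so they never clash with fibre
   colours.  A complete H has rc(H) = 1 (complete_rc), and if x, y are at
   distance diam(G) = rx_3(G), every tree through (x,u), (x,v), (y,u) has more
   than diam(G) edges, because walks of G[H] project to walks of G
   (lex_rx3_gt). *)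

Lemma uniq_map_inj (A B : eqType) (f : A -> B) (s : seq A) :
  uniq (map f s) -> {in s &, injective f}.
Proof.
elim: s => [|a s IH] //= /andP[fa Us] x y.
rewrite !inE => /orP[/eqP->|xs] /orP[/eqP->|ys] fxy //.
- by move: fa; rewrite fxy map_f.
- by move: fa; rewrite -fxy map_f.
- exact: IH.
Qed.

Section Walks.
Variable V : finType.
Implicit Types (s t : seq V) (es : seq (V * V)) (r x y z : V) (p : seq V).

Definition walk_edges s : seq (V * V) :=
  if s is x :: p then pairmap pair x p else [::].

Definition key (u : V * V) : {set V} := [set u.1; u.2].
Definition swap (u : V * V) : V * V := (u.2, u.1).

Lemma key_swap u : key (swap u) = key u.
Proof. by apply/setP=> v; rewrite !inE orbC. Qed.

Lemma walk_edges_cat s x t :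
  walk_edges (s ++ x :: t) = walk_edges (rcons s x) ++ walk_edges (x :: t).
Proof. by case: s => [|y s] //=; rewrite -cat_rcons pairmap_cat last_rcons. Qed.

Lemma walk_edges_rev s : walk_edges (rev s) = rev (map swap (walk_edges s)).
Proof.
elim: s => [|x [|y s] IH] //.
rewrite rev_cons -cats1 rev_cons -cats1 -catA /= walk_edges_cat cats1 -rev_cons.
by rewrite IH /= rev_cons -cats1.
Qed.

Lemma keys_walk_rev s : map key (walk_edges (rev s)) = rev (map key (walk_edges s)).
Proof.
rewrite walk_edges_rev map_rev -map_comp; congr rev.
by apply: eq_map => u /=; rewrite key_swap.
Qed.

Lemma all_walk_edges (e : rel V) x p :
  all (fun u => e u.1 u.2) (walk_edges (x :: p)) = path e x p.
Proof. by elim: p x => [|y p IH] x //=; rewrite IH. Qed.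

Lemma map_walk_edges (A : Type) (f : V -> V -> A) x p :
  map (fun u => f u.1 u.2) (walk_edges (x :: p)) = pairmap f x p.
Proof. by elim: p x => [|y p IH] x //=; rewrite IH. Qed.

Lemma walk_edges_mem s u : u \in walk_edges s -> (u.1 \in s) && (u.2 \in s).
Proof.
elim: s => [|x [|y s] IH] //=; rewrite inE => /orP[/eqP->|H].
  by rewrite /= !inE !eqxx orbT.
by move: (IH H); rewrite /= !inE => /andP[->->]; rewrite !orbT.
Qed.

Lemma walk_edges_fst x p u : u \in walk_edges (x :: p) -> u.1 \in belast x p.
Proof.
elim: p x => [|y p IH] x //=; rewrite !inE => /orP[/eqP->|H].
  by rewrite eqxx.
by rewrite (IH y H) orbT.
Qed.

Lemma uniq_walk_keys s : uniq s -> uniq (map key (walk_edges s)).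
Proof.
elim: s => [|x [|y s] IH] //= /andP[xNs Us].
rewrite IH // andbT; apply/mapP => -[u u_in key_u].
have /andP[u1 u2] := walk_edges_mem (s := y :: s) u_in.
have : x \in key u by rewrite -key_u !inE eqxx.
by rewrite !inE => /orP[]/eqP xu; move: xNs; rewrite xu ?u1 ?u2.
Qed.

(* Every edge of the walk s ++ [:: z] has an endpoint in s, so if s avoids t
   none of these edges is an edge of the walk t. *)
Lemma walk_keys_disjoint s z t : ~~ has (mem t) s ->
  ~~ has (mem (map key (walk_edges t))) (map key (walk_edges (rcons s z))).
Proof.
case: s => [|x s] sNt //=; apply/hasP => -[K /mapP[u u_in ->]].
move=> /mapP[w w_in key_uw].
have u1s : u.1 \in x :: s by rewrite -(belast_rcons x s z) walk_edges_fst.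
have /andP[w1 w2] := walk_edges_mem w_in.
have : u.1 \in key w by rewrite -key_uw !inE eqxx.
by rewrite !inE => /orP[]/eqP u1w; move/hasP: sNt; apply; exists u.1; rewrite // u1w.
Qed.

Lemma first_meet (L M : seq V) : has (mem L) M ->
  exists L1 L2 M1 M2 z,
    [/\ L = L1 ++ z :: L2, M = rcons M1 z ++ M2 & ~~ has (mem L) M1].
Proof.
move=> hasLM; case: {hasLM}(split_find hasLM) => z M1 M2 zL M1NL.
move: M1NL; case/splitPr: zL => L1 L2 M1NL.
by exists L1, L2, M1, M2, z.
Qed.

End Walks.
Arguments key {V}.
Arguments swap {V}.

Section GrowingTrees.
Variable V : finType.
Implicit Types (es : seq (V * V)) (r x y : V) (p : seq V).

Definition rooted_span es r : {set V} := r |: tree_vertices es.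

Definition rooted_tree es r :=
  {in rooted_span es r, forall x, connect (tree_rel es) r x} /\
  size es = #|rooted_span es r| - 1.

Lemma tree_vertices_cat es1 es2 :
  tree_vertices (es1 ++ es2) = tree_vertices es1 :|: tree_vertices es2.
Proof. by apply/setP=> x; rewrite !inE has_cat. Qed.

Lemma tree_vertices_walk x p y :
  (y \in tree_vertices (walk_edges (x :: p))) = (p != [::]) && (y \in x :: p).
Proof.
rewrite inE; elim: p x => [|z p IH] x //=; rewrite IH.
by case: p {IH} => [|w p] /=; rewrite !inE ?orbF ![_ == y]eq_sym;
  case: (y == x); case: (y == z); rewrite /= ?orbT.
Qed.

Lemma connect_tree_relUl es1 es2 x y :
  connect (tree_rel es1) x y -> connect (tree_rel (es1 ++ es2)) x y.
Proof.
apply: connect_sub => u v uv; apply: connect1.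
by move: uv; rewrite /tree_rel !mem_cat => /orP[]->; rewrite ?orbT.
Qed.

Lemma connect_tree_relUr es1 es2 x y :
  connect (tree_rel es2) x y -> connect (tree_rel (es1 ++ es2)) x y.
Proof.
apply: connect_sub => u v uv; apply: connect1.
by move: uv; rewrite /tree_rel !mem_cat => /orP[]->; rewrite ?orbT.
Qed.

Lemma tree_rel_vertices es x y :
  tree_rel es x y -> (x \in tree_vertices es) && (y \in tree_vertices es).
Proof.
rewrite !inE => /orP[] xy; apply/andP; split; apply/hasP;
  by [exists (x, y); rewrite /= ?eqxx ?orbT | exists (y, x); rewrite /= ?eqxx ?orbT].
Qed.

Lemma tree_walk_vertices es x p : x \in tree_vertices es ->
  path (tree_rel es) x p -> {subset x :: p <= tree_vertices es}.
Proof.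
elim: p x => [|y p IH] x xT /=; first by move=> _ v; rewrite inE => /eqP->.
move=> /andP[xy yp] v; rewrite inE => /orP[/eqP-> //|]; apply: IH yp v.
by case/andP: (tree_rel_vertices xy).
Qed.

Lemma tree_rel_walk x p : path (tree_rel (walk_edges (x :: p))) x p.
Proof.
elim: p x => [|y p IH] x //=; rewrite /tree_rel inE eqxx /=.
by apply: sub_path (IH y) => u v; rewrite /tree_rel /= !inE => /orP[]->; rewrite ?orbT.
Qed.

Lemma rooted_span_root es r : r \in rooted_span es r.
Proof. exact: setU11. Qed.

Lemma rooted_span_catl es es' r x :
  x \in rooted_span es r -> x \in rooted_span (es ++ es') r.
Proof. by rewrite /rooted_span tree_vertices_cat !in_setU1 in_setU => /orP[]->; rewrite ?orbT. Qed.

Lemma rooted_span_attach es r y p : y \in rooted_span es r ->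
  rooted_span (es ++ walk_edges (y :: p)) r = rooted_span es r :|: [set x in p].
Proof.
move=> yT; apply/setP=> x.
rewrite /rooted_span tree_vertices_cat !in_setU1 !in_setU tree_vertices_walk in_set.
case: p => [|z p] /=; first by rewrite !inE !orbF.
move: yT; rewrite /rooted_span !inE => yT; case: (x =P y) => [->|_] /=.
  by rewrite !orbT yT.
by rewrite !orbA.
Qed.

Lemma rooted_span_walk_last es r y p : y \in rooted_span es r ->
  last y p \in rooted_span (es ++ walk_edges (y :: p)) r.
Proof.
move=> yT; rewrite rooted_span_attach // in_setU in_set.
by case: p => [|z p] /=; rewrite ?yT ?mem_last ?orbT.
Qed.

Lemma rooted_tree_attach es r y p : rooted_tree es r -> y \in rooted_span es r ->
  uniq p -> {in p, forall x, x \notin rooted_span es r} ->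
  rooted_tree (es ++ walk_edges (y :: p)) r.
Proof.
move=> [reach size_es] yT Up fresh; split.
  move=> x; rewrite rooted_span_attach // in_setU in_set => /orP[xT|xp].
    exact/connect_tree_relUl/reach.
  apply: connect_trans (connect_tree_relUl _ (reach _ yT)) _.
  by apply/connect_tree_relUr/(path_connect (tree_rel_walk y p)); rewrite inE xp orbT.
rewrite rooted_span_attach // cardsU size_cat size_es /= size_pairmap.
have -> : rooted_span es r :&: [set x in p] = set0.
  apply/setP=> x; rewrite !inE; apply/negP=> /andP[xT xp].
  by move: (fresh _ xp); rewrite !inE xT.
have -> : #|[set x in p]| = size p by rewrite cardsE; apply/card_uniqP.
rewrite cards0 subn0.
have : 0 < #|rooted_span es r| by apply/card_gt0P; exists r; apply: rooted_span_root.
lia.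
Qed.

Lemma rooted_tree_walk r p : uniq (r :: p) -> rooted_tree (walk_edges (r :: p)) r.
Proof.
move=> /andP[rNp Up].
have span0 : rooted_span [::] r = [set r] by apply/setP=> x; rewrite !inE orbF.
have tree0 : rooted_tree [::] r.
  by split; [move=> x; rewrite span0 inE => /eqP->; apply: connect0 | rewrite span0 cards1].
apply: (rooted_tree_attach tree0 (rooted_span_root _ _) Up) => x xp.
by rewrite span0 inE; apply: contraNneq rNp => <-.
Qed.

Lemma rooted_span_walk r p : rooted_span (walk_edges (r :: p)) r = [set x in r :: p].
Proof.
apply/setP=> x; rewrite /rooted_span in_setU1 tree_vertices_walk !inE.
by case: p => [|y p] /=; rewrite ?orbA ?orbb.
Qed.

Lemma rooted_tree_root es r : rooted_tree es r -> es != [::] -> r \in tree_vertices es.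
Proof.
move=> [reach size_es] es_nil.
have [x xT xr] : exists2 x, x \in rooted_span es r & x != r.
  have size_gt0 : 0 < size es by rewrite lt0n size_eq0.
  have : 1 < #|rooted_span es r| by lia.
  case/card_gt1P=> y [x [yT xT yx]]; case: (eqVneq x r) => [xr|]; last by exists x.
  by exists y; rewrite // -xr.
have /connectP[[|y p] /= rp xp] := reach x xT; first by rewrite xp eqxx in xr.
by case/andP: rp => /tree_rel_vertices /andP[].
Qed.

Lemma rooted_tree_rainbow (e : rel V) (c : V -> V -> nat) es r (S : {set V}) :
  rooted_tree es r -> es != [::] ->
  all (fun u => e u.1 u.2) es -> uniq (map (fun u => c u.1 u.2) es) ->
  S \subset rooted_span es r -> rainbow_tree e c S es.
Proof.
move=> es_tree es_nil edges colors sub.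
have span_es : rooted_span es r = tree_vertices es.
  apply/setP=> x; rewrite in_setU1; case: eqP => // ->.
  by rewrite rooted_tree_root.
have sym : connect_sym (tree_rel es).
  by apply: sym_connect_sym => x y; rewrite /tree_rel orbC.
case: es_tree => reach size_es.
rewrite span_es in reach size_es sub; split => // x y xT yT.
by apply: connect_trans (reach y yT); rewrite sym; apply: reach.
Qed.

End GrowingTrees.

Definition rainbow_spider (V : finType) (e : rel V) (c : V -> V -> nat)
    (z : V) (l1 l2 l3 : seq V) (x1 x2 x3 : V) :=
  [/\ [/\ path e z l1, path e z l2 & path e z l3],
      [/\ last z l1 = x1, last z l2 = x2 & last z l3 = x3],
      uniq (z :: l1 ++ l2 ++ l3)
    & uniq (pairmap c z l1 ++ pairmap c z l2 ++ pairmap c z l3)].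

Section RainbowTrees.
Variables (V : finType) (g : rel V) (k : nat) (c : V -> V -> nat).
Variable es : seq (V * V).
Hypothesis gsym : symmetric g.
Hypothesis c_col : edge_coloring g k c.
Hypothesis es_edges : all (fun u => g u.1 u.2) es.
Hypothesis es_rainbow : uniq (map (fun u => c u.1 u.2) es).
Hypothesis es_connected :
  {in tree_vertices es &, forall x y, connect (tree_rel es) x y}.

Definition color (u : V * V) := c u.1 u.2.

Definition tree_walk (s : seq V) := all (fun u => tree_rel es u.1 u.2) (walk_edges s).

Lemma tree_rel_edge x y : tree_rel es x y -> g x y.
Proof. by case/orP=> /(allP es_edges) //=; rewrite gsym. Qed.

Lemma tree_walk_path z l : tree_walk (z :: l) -> path g z l.
Proof. by rewrite /tree_walk all_walk_edges => /(sub_path tree_rel_edge). Qed.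

Lemma tree_walk_rev s : tree_walk s -> tree_walk (rev s).
Proof.
move=> ws; rewrite /tree_walk walk_edges_rev all_rev all_map.
by apply/allP=> u /(allP ws); rewrite /= /tree_rel orbC.
Qed.

Lemma tree_walk_split s z t : tree_walk (s ++ z :: t) ->
  tree_walk (rcons s z) /\ tree_walk (z :: t).
Proof. by rewrite /tree_walk walk_edges_cat all_cat => /andP. Qed.

(* Tree edges with different endpoint sets have different colours, since a
   tree edge and its reversal carry the colour of the same edge of es. *)
Lemma tree_colors_uniq (E : seq (V * V)) :
  all (fun u => tree_rel es u.1 u.2) E -> uniq (map key E) -> uniq (map color E).
Proof.
have lift u : tree_rel es u.1 u.2 ->
    exists2 w, w \in es & key w = key u /\ c w.1 w.2 = color u.
  case: u => x y /orP[xy|yx]; first by exists (x, y).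
  exists (y, x) => //; split; first exact: (key_swap (x, y)).
  by rewrite /color /= (c_col (allP es_edges _ yx)).1.
have inj := uniq_map_inj es_rainbow.
elim: E => [|u E IH] //= /andP[uT ET] /andP[uNE UE]; rewrite IH // andbT.
apply/mapP => -[w wE color_uw]; move/negP: uNE; apply.
suff -> : key u = key w by rewrite map_f.
have [u' u'es [<- cu]] := lift u uT; have [w' w'es [<- cw]] := lift w (allP ET _ wE).
by congr key; apply: inj => //; rewrite cu cw.
Qed.

Lemma tree_path x y : x \in tree_vertices es -> y \in tree_vertices es ->
  exists p, [/\ path (tree_rel es) x p, last x p = y & uniq (x :: p)].
Proof.
move=> xT yT; have /connectP[p xp ->] := es_connected xT yT.
by case: (shortenP xp) => p' xp' Up' _; exists p'.
Qed.

Lemma rainbow_tree_path x y : x \in tree_vertices es -> y \in tree_vertices es ->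
  exists p, [/\ path g x p, last x p = y, uniq (x :: p) & uniq (pairmap c x p)].
Proof.
move=> xT yT; have [p [xp <- Up]] := tree_path xT yT.
exists p; split => //; first by apply: sub_path xp => u v /tree_rel_edge.
rewrite -map_walk_edges; apply: tree_colors_uniq; first by rewrite all_walk_edges.
exact: uniq_walk_keys.
Qed.

(* Any three vertices of a rainbow tree are the feet of a rainbow spider:
   take the tree walk L from x1 to x2 and the first vertex z at which the
   tree walk from x3 to x1 meets L. *)
Lemma rainbow_tree_spider x1 x2 x3 : x1 \in tree_vertices es ->
  x2 \in tree_vertices es -> x3 \in tree_vertices es ->
  exists z l1 l2 l3, rainbow_spider g c z l1 l2 l3 x1 x2 x3.
Proof.
move=> x1T x2T x3T.
have [p [p_walk p_last Up]] := tree_path x1T x2T.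
have [q [q_walk q_last Uq]] := tree_path x3T x1T.
have meet : has (mem (x1 :: p)) (x3 :: q).
  by apply/hasP; exists x1; [rewrite -q_last mem_last | exact: mem_head].
have [L1 [L2 [M1 [M2 [z [EL EM M1NL]]]]]] := first_meet meet.
have [wL1 wL2] : tree_walk (rcons L1 z) /\ tree_walk (z :: L2).
  by apply: tree_walk_split; rewrite -EL /tree_walk all_walk_edges.
have [wM1 _] : tree_walk (rcons M1 z) /\ tree_walk (z :: M2).
  by apply: tree_walk_split; rewrite -cat_rcons -EM /tree_walk all_walk_edges.
have UM1z : uniq (rcons M1 z) by move: Uq; rewrite EM cat_uniq => /andP[].
have UL : uniq (L1 ++ z :: L2) by rewrite -EL.
have rev_walk s : tree_walk (rcons s z) -> tree_walk (z :: rev s).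
  by move=> /tree_walk_rev; rewrite rev_rcons.
have rev_last s : last z (rev s) = head z s.
  by case: s => [|y s] //=; rewrite rev_cons last_rcons.
exists z, (rev L1), L2, (rev M1); split.
- by split; apply: tree_walk_path => //; apply: rev_walk.
- split.
  + by rewrite rev_last; move/(congr1 (head z)): EL; case: (L1).
  + by move/(congr1 (last x1)): EL; rewrite /= last_cat p_last => ->.
  + by rewrite rev_last; move/(congr1 (head z)): EM; case: (M1).
- have perm_legs : perm_eq (z :: rev L1 ++ L2 ++ rev M1) ((L1 ++ z :: L2) ++ M1).
    rewrite -catA -cat_cons (perm_catCA [:: z]) perm_cat ?perm_rev //=.
    by rewrite perm_cons perm_cat ?perm_rev.
  rewrite (perm_uniq perm_legs) cat_uniq UL -EL M1NL /=.
  by move: UM1z; rewrite rcons_uniq => /andP[].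
- rewrite -!map_walk_edges -!map_cat; apply: tree_colors_uniq.
    by rewrite !all_cat -!/(tree_walk _) (rev_walk _ wL1) wL2 (rev_walk _ wM1).
  rewrite !map_cat -!rev_rcons !keys_walk_rev.
  have perm_keys : perm_eq (rev (map key (walk_edges (rcons L1 z))) ++
      map key (walk_edges (z :: L2)) ++ rev (map key (walk_edges (rcons M1 z))))
    (map key (walk_edges (x1 :: p)) ++ map key (walk_edges (rcons M1 z))).
    by rewrite EL walk_edges_cat map_cat -catA perm_cat ?perm_rev // perm_cat ?perm_rev.
  rewrite (perm_uniq perm_keys) cat_uniq !uniq_walk_keys //=.
  by rewrite andbT; apply: walk_keys_disjoint M1NL.
Qed.

End RainbowTrees.

Section ThreeVertices.
Variable V : finType.

Lemma card_set3 (x y z : V) : x != y -> x != z -> y != z -> #|[set x; y; z]| = 3.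
Proof.
move=> xy xz yz; rewrite -setUA cardsU1 cards2 yz !inE.
by rewrite (negbTE xy) (negbTE xz).
Qed.

Lemma set3_subset (A : {set V}) (x y z : V) :
  x \in A -> y \in A -> z \in A -> [set x; y; z] \subset A.
Proof. by move=> xA yA zA; apply/subsetP=> v; rewrite !inE -orbA => /or3P[]/eqP->. Qed.

Lemma set3_enum (S : {set V}) : #|S| = 3 ->
  exists x y z, [/\ x != y, x != z, y != z & S = [set x; y; z]].
Proof.
move=> S3; have := enum_uniq (mem S); have := cardE S; rewrite S3.
have memS v : (v \in S) = (v \in enum S) by rewrite mem_enum.
case: (enum S) memS => [|x [|y [|z [|]]]] //= memS _.
rewrite !inE negb_or => /and3P[/andP[xy xz] yz _]; exists x, y, z; split => //.
by apply/setP=> v; rewrite memS !inE orbA.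
Qed.

Lemma third_vertex (x y : V) : 2 < #|V| -> exists w, x != w /\ y != w.
Proof.
move=> V3; have : 0 < #|~: [set x; y]|.
  have := cardsC [set x; y]; have := cards2 x y; case: (x != y) => /= -> E;
  by move: V3; rewrite -E; lia.
by case/card_gt0P => w; rewrite !inE negb_or => /andP[xw yw]; exists w; rewrite !(eq_sym _ w).
Qed.

Lemma rainbow_tree_subset (e : rel V) c (S S' : {set V}) es :
  S' \subset S -> rainbow_tree e c S es -> rainbow_tree e c S' es.
Proof. by move=> S'S [? ? ? ? SE]; split => //; apply: subset_trans SE. Qed.

Lemma rainbow_tree_size (e : rel V) k c S es :
  edge_coloring e k c -> rainbow_tree e c S es -> size es <= k.
Proof.
move=> c_col [es_edges es_rainbow _ _ _].
rewrite -(size_map (fun u : V * V => c u.1 u.2)) -[k](size_iota 0).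
apply: uniq_leq_size es_rainbow _ => _ /mapP[u ues ->].
by rewrite mem_iota (c_col _ _ (allP es_edges _ ues)).2.
Qed.

(* A rainbow tree through three vertices has two edges, so rx_3 >= 2. *)
Lemma rx3_gt1 (e : rel V) k : 2 < #|V| -> rainbow_3_connecting e k -> 1 < k.
Proof.
move=> V3 [c [c_col c_rx3]].
have [x [y [_ _ xy]]] := card_gt1P (ltnW V3).
have [z [xz yz]] := third_vertex x y V3.
have [es es_tree] := c_rx3 _ (card_set3 xy xz yz).
have := rainbow_tree_size c_col es_tree; case: es_tree => _ _ _ size_es sub.
have := subset_leq_card sub; rewrite card_set3 //; lia.
Qed.

End ThreeVertices.

Section RainbowThreeConnected.
Variables (V : finType) (g : rel V) (k : nat) (c : V -> V -> nat).
Hypothesis gsym : symmetric g.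
Hypothesis c_col : edge_coloring g k c.
Hypothesis c_rx3 : forall S : {set V}, #|S| = 3 -> exists es, rainbow_tree g c S es.

Lemma rx3_rainbow_path x y : 2 < #|V| -> x != y ->
  exists p, [/\ path g x p, last x p = y, uniq (x :: p) & uniq (pairmap c x p)].
Proof.
move=> V3 xy; have [w [xw yw]] := third_vertex x y V3.
have [es [es_edges es_rainbow es_conn _ sub]] := c_rx3 (card_set3 xy xw yw).
by apply: (rainbow_tree_path gsym c_col es_edges es_rainbow es_conn);
  apply: (subsetP sub); rewrite !inE eqxx ?orbT.
Qed.

Lemma rx3_spider x1 x2 x3 : x1 != x2 -> x1 != x3 -> x2 != x3 ->
  exists z l1 l2 l3, rainbow_spider g c z l1 l2 l3 x1 x2 x3.
Proof.
move=> x12 x13 x23.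
have [es [es_edges es_rainbow es_conn _ sub]] := c_rx3 (card_set3 x12 x13 x23).
by apply: (rainbow_tree_spider gsym c_col es_edges es_rainbow es_conn);
  apply: (subsetP sub); rewrite !inE eqxx ?orbT.
Qed.

End RainbowThreeConnected.

Section LexColoring.
Variables (T U : finType) (g : rel T) (h : rel U) (a : nat).
Variables (cG : T -> T -> nat) (cH : U -> U -> nat).
Hypothesis girr : irreflexive g.
Hypothesis hirr : irreflexive h.
Hypothesis cG_col : edge_coloring g a cG.
Hypothesis a_gt1 : 1 < a.

Local Notation LP := (lexprod g h).

(* A colour of G, different from the colour cG x y (this needs a >= 2). *)
Definition other_color x y := if cG x y == 0 then 1 else 0.

Definition lex_color (v w : T * U) :=
  if v.1 == w.1 then a + cH v.2 w.2
  else if v.2 == w.2 then other_color v.1 w.1 else cG v.1 w.1.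

Lemma other_color_lt x y : other_color x y < a.
Proof. by rewrite /other_color; case: ifP => _; lia. Qed.

Lemma other_color_neq x y : other_color x y != cG x y.
Proof. by rewrite /other_color; case: (cG x y =P 0) => [->|/eqP cxy] //; rewrite eq_sym. Qed.

Lemma lex_color_edge_coloring b :
  edge_coloring h b cH -> edge_coloring LP (a + b) lex_color.
Proof.
move=> cH_col [x u] [y v]; rewrite /lexprod /lex_color /= => /orP[xy | /andP[/eqP <- uv]].
  have [cG_sym cG_lt] := cG_col xy.
  have [xNy yNx] : x != y /\ y != x by split; apply: contraTneq xy => ->; rewrite girr.
  rewrite (negbTE xNy) (negbTE yNx) [v == u]eq_sym.
  have other_lt := other_color_lt x y.
  case: (u == v); split; try lia.
  by rewrite /other_color cG_sym.
by have [cH_sym cH_lt] := cH_col _ _ uv; rewrite eqxx cH_sym; split => //; lia.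
Qed.

Lemma uniq_shifted_cat (s t : seq nat) : uniq s -> uniq t -> all (fun k => k < a) t ->
  uniq (map (addn a) s ++ t).
Proof.
move=> Us Ut t_lt; rewrite cat_uniq Ut andbT (map_inj_uniq (@addnI a)) Us /=.
by apply/hasP => -[k /(allP t_lt) k_lt /mapP[j _ kj]]; move: k_lt; rewrite kj ltnNge leq_addr.
Qed.

Lemma path_colors_lt x q : path g x q -> all (fun k => k < a) (pairmap cG x q).
Proof.
elim: q x => [|y q IH] x //= /andP[xy yq].
by rewrite IH // (cG_col xy).2.
Qed.

Definition fiber_edges x u p : seq ((T * U) * (T * U)) :=
  walk_edges ((x, u) :: map (pair x) p).

Lemma fiber_edges_in x u p : path h u p -> all (fun w => LP w.1 w.2) (fiber_edges x u p).
Proof.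
rewrite /fiber_edges all_walk_edges; elim: p u => [|v p IH] u //= /andP[uv vp].
by rewrite {1}/lexprod /= eqxx uv orbT IH.
Qed.

Lemma fiber_edges_colors x u p :
  map (fun w => lex_color w.1 w.2) (fiber_edges x u p) = map (addn a) (pairmap cH u p).
Proof.
rewrite /fiber_edges map_walk_edges; elim: p u => [|v p IH] u //=.
by rewrite IH {1}/lex_color /= eqxx.
Qed.

Lemma fiber_edges_tree x u p : uniq (u :: p) -> rooted_tree (fiber_edges x u p) (x, u).
Proof.
move=> Up; apply: rooted_tree_walk.
by rewrite -map_cons map_inj_uniq // => v w [].
Qed.

Lemma fiber_edges_span x u p v :
  (v \in rooted_span (fiber_edges x u p) (x, u)) = (v.1 == x) && (v.2 \in u :: p).
Proof.
rewrite /fiber_edges rooted_span_walk in_set -map_cons.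
case: v => y w; apply/mapP/andP => [[w' w'p [-> ->]] | [/eqP /= -> wp]].
  by rewrite eqxx.
by exists w.
Qed.

(* A lift of the vertices q of a walk of G to G[H], ending at H-coordinate e
   and alternating the H-coordinate between e and t, so that consecutive
   vertices never share it: then each edge of the lifted walk carries the
   colour of its projection in G. *)
Fixpoint zigzag (q : seq T) (e t : U) : seq (T * U) :=
  if q is y :: q' then (y, if odd (size q') then t else e) :: zigzag q' e t else [::].

(* The H-coordinate that the starting vertex of the lift must avoid. *)
Definition zigzag_avoid (q : seq T) (e t : U) : U :=
  if q is _ :: q' then (if odd (size q') then t else e) else t.

Lemma zigzag_fst q e t : map fst (zigzag q e t) = q.
Proof. by elim: q => [|y q IH] //=; rewrite IH. Qed.

Lemma zigzag_last q e t w x : q != [::] -> last w (zigzag q e t) = (last x q, e).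
Proof. by elim: q w x => [|y [|y' q] IH] w x //= _; apply: IH. Qed.

Lemma zigzag_path q e t x s : h e t -> path g x q -> s != zigzag_avoid q e t ->
  path LP (x, s) (zigzag q e t) /\
  pairmap lex_color (x, s) (zigzag q e t) = pairmap cG x q.
Proof.
move=> et; elim: q x s => [|y q IH] x s //= /andP[xy yq] s_avoid.
set s' := if odd (size q) then t else e.
have s'_avoid : s' != zigzag_avoid q e t.
  have te : t != e by apply: contraTneq et => ->; rewrite hirr.
  by rewrite /s'; case: (q) => [|y' q'] /=; case: odd; rewrite // eq_sym.
have [IH1 IH2] := IH y s' yq s'_avoid.
have xNy : x != y by apply: contraTneq xy => ->; rewrite girr.
by rewrite IH1 IH2 {1}/lexprod {1}/lex_color /= xy (negbTE xNy) (negbTE s_avoid).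
Qed.

End LexColoring.

Section LexTrees.
Variables (T U : finType) (g : rel T) (h : rel U) (a : nat).
Variables (cG : T -> T -> nat) (cH : U -> U -> nat).
Hypothesis gsym : symmetric g.
Hypothesis girr : irreflexive g.
Hypothesis hirr : irreflexive h.
Hypothesis T_gt2 : 2 < #|T|.
Hypothesis a_gt1 : 1 < a.
Hypothesis cG_col : edge_coloring g a cG.
Hypothesis cG_rx3 : forall S : {set T}, #|S| = 3 -> exists es, rainbow_tree g cG S es.
Hypothesis h_rc : forall u v, u != v -> exists p, rainbow_path h cH u v p.
Hypothesis g_nb : forall x, exists y, g x y.
Hypothesis h_nb : forall u, exists v, h u v.

Local Notation LP := (lexprod g h).
Local Notation col := (lex_color a cG cH).

Lemma fiber_path_tree (x : T) (u v : U) (p : seq U) : u != v ->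
  rainbow_path h cH u v p ->
  [/\ rooted_tree (fiber_edges x u p) (x, u), fiber_edges x u p != [::],
      (x, v) \in rooted_span (fiber_edges x u p) (x, u),
      all (fun w => LP w.1 w.2) (fiber_edges x u p)
    & map (fun w => col w.1 w.2) (fiber_edges x u p) = map (addn a) (pairmap cH u p)].
Proof.
move=> uv [p_path Up p_last _]; split.
- exact: fiber_edges_tree.
- by case: p p_last {p_path Up} => //= uu; rewrite -uu eqxx in uv.
- by rewrite fiber_edges_span eqxx -p_last /= mem_last.
- exact: fiber_edges_in.
- exact: fiber_edges_colors.
Qed.

(* The main gluing step: a rooted tree whose vertices project into s, and
   which contains two vertices (z, al) and (z, be) of the fibre over z, is
   extended by a zigzag lift of a walk z :: l of G avoiding s; the lift
   starts at whichever of (z, al), (z, be) is allowed, and reaches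
   (last z l, e) for the prescribed H-coordinate e. *)
Lemma attach_zigzag (es : seq ((T * U) * (T * U))) (z : T) (al be : U)
    (s l : seq T) (e : U) :
  al != be -> rooted_tree es (z, al) -> (z, be) \in rooted_span es (z, al) ->
  {in rooted_span es (z, al), forall v, v.1 \in s} ->
  path g z l -> uniq l -> ~~ has (mem s) l ->
  exists L, [/\ rooted_tree (es ++ L) (z, al), all (fun w => LP w.1 w.2) L,
    map (fun w => col w.1 w.2) L = pairmap cG z l,
    {in rooted_span (es ++ L) (z, al), forall v, v.1 \in s ++ l}
  & l != [::] -> (last z l, e) \in rooted_span (es ++ L) (z, al)].
Proof.
move=> al_be es_tree be_span span_s l_path Ul l_fresh.
have [t et] := h_nb e.
pose st := if al != zigzag_avoid l e t then al else be.
have st_avoid : st != zigzag_avoid l e t.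
  by rewrite /st; case: ifP => [-> | /negbFE/eqP <-] //; rewrite eq_sym.
have st_span : (z, st) \in rooted_span es (z, al).
  by rewrite /st; case: ifP => _ //; apply: rooted_span_root.
have [Z_path Z_colors] := zigzag_path a cG cH girr hirr et l_path st_avoid.
have UZ : uniq (zigzag l e t) by apply: (@map_uniq _ _ fst); rewrite zigzag_fst.
have Z_fst v : v \in zigzag l e t -> v.1 \in l.
  by move=> vZ; rewrite -(zigzag_fst l e t) map_f.
have Z_fresh : {in zigzag l e t, forall v, v \notin rooted_span es (z, al)}.
  move=> v /Z_fst vl; apply/negP => /span_s vs.
  by move/hasP: l_fresh; apply; exists v.1.
exists (walk_edges ((z, st) :: zigzag l e t)); split.
- exact: rooted_tree_attach.
- by rewrite all_walk_edges.
- by rewrite map_walk_edges.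
- move=> v; rewrite rooted_span_attach // in_setU in_set mem_cat.
  by case/orP=> [/span_s -> | /Z_fst ->]; rewrite ?orbT.
- move=> l_nil; have := rooted_span_walk_last (zigzag l e t) st_span.
  by rewrite (zigzag_last _ _ _ z l_nil).
Qed.

(* Three vertices in one fibre: a rainbow path of H through the fibre, plus,
   if needed, a detour through a neighbouring fibre coloured by G. *)
Lemma one_fiber_tree x u1 u2 u3 : u1 != u2 -> u1 != u3 -> u2 != u3 ->
  exists es, rainbow_tree LP col [set (x, u1); (x, u2); (x, u3)] es.
Proof.
move=> u12 u13 u23; have [p p_rb] := h_rc u12.
have [F_tree F_nil u2F F_edges F_colors] := fiber_path_tree x u12 p_rb.
set F := fiber_edges x u1 p in F_tree F_nil u2F F_edges F_colors.
have [_ _ _ p_rainbow] := p_rb.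
have u1F : (x, u1) \in rooted_span F (x, u1) by apply: rooted_span_root.
case: (boolP (u3 \in u1 :: p)) => u3p.
  exists F; apply: rooted_tree_rainbow F_tree F_nil F_edges _ _.
    by rewrite F_colors (map_inj_uniq (@addnI a)).
  by apply: set3_subset; rewrite // /F fiber_edges_span eqxx.
have [y xy] := g_nb x.
have xNy : x != y by apply: contraTneq xy => ->; rewrite girr.
pose D := [:: (y, u1); (x, u3)].
have D_fresh : {in D, forall v, v \notin rooted_span F (x, u1)}.
  move=> v vD; rewrite /F fiber_edges_span; move: vD; rewrite !inE.
  case/orP=> /eqP-> /=; first by rewrite eq_sym (negbTE xNy).
  by rewrite eqxx -in_cons.
have UD : uniq D by rewrite /= inE andbT xpair_eqE eq_sym (negbTE xNy).
have D_edges : path LP (x, u1) D by rewrite /= /lexprod /= xy (gsym y x) xy.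
have D_colors : pairmap col (x, u1) D = [:: other_color cG x y; cG x y].
  rewrite /= /lex_color /= (negbTE xNy) eq_sym (negbTE xNy) eqxx (negbTE u13).
  by rewrite /other_color -(cG_col xy).1.
exists (F ++ walk_edges ((x, u1) :: D)); apply: (rooted_tree_rainbow (r := (x, u1))).
- exact: rooted_tree_attach.
- by case: (F) F_nil.
- by rewrite all_cat F_edges all_walk_edges.
- rewrite map_cat F_colors map_walk_edges D_colors.
  apply: uniq_shifted_cat => //=; first by rewrite inE other_color_neq.
  by rewrite (other_color_lt cG a_gt1) (cG_col xy).2.
- apply: set3_subset; try exact: rooted_span_catl.
  by rewrite rooted_span_attach // in_setU in_set /D !inE eqxx !orbT.
Qed.

(* Two vertices in the fibre over x and one over y: a rainbow path of H in
   the fibre, plus a zigzag lift of a rainbow path of G from x to y. *)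
Lemma two_fiber_tree x y u1 u2 u3 : x != y -> u1 != u2 ->
  exists es, rainbow_tree LP col [set (x, u1); (x, u2); (y, u3)] es.
Proof.
move=> xy u12; have [p p_rb] := h_rc u12.
have [F_tree F_nil u2F F_edges F_colors] := fiber_path_tree x u12 p_rb.
have [_ _ _ p_rainbow] := p_rb.
have u1F : (x, u1) \in rooted_span (fiber_edges x u1 p) (x, u1) by apply: rooted_span_root.
have F_fst : {in rooted_span (fiber_edges x u1 p) (x, u1), forall v, v.1 \in [:: x]}.
  by move=> v; rewrite fiber_edges_span mem_seq1 => /andP[].
have [q [q_path q_last Uq q_rainbow]] := rx3_rainbow_path gsym cG_col cG_rx3 T_gt2 xy.
have [xNq Uq'] : x \notin q /\ uniq q by apply/andP.
have q_nil : q != [::] by apply: contraNneq xy => q_nil; rewrite -q_last q_nil.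
have q_fresh : ~~ has (mem [:: x]) q by rewrite has_sym /= orbF.
have [L [L_tree L_edges L_colors _ L_last]] :=
  attach_zigzag u3 u12 F_tree u2F F_fst q_path Uq' q_fresh.
exists (fiber_edges x u1 p ++ L); apply: (rooted_tree_rainbow (r := (x, u1))) => //.
- by case: (fiber_edges x u1 p) F_nil.
- by rewrite all_cat F_edges.
- rewrite map_cat F_colors L_colors; apply: uniq_shifted_cat => //.
  exact: path_colors_lt q_path.
- apply: set3_subset; try exact: rooted_span_catl.
  by rewrite -q_last L_last.
Qed.

(* Three vertices in three different fibres: an edge (z, al) (z, be) in the
   fibre over the centre z of a rainbow spider of G, plus a zigzag lift of
   each leg; al is the H-coordinate of the foot lying at z, if any. *)
Lemma three_fiber_tree x1 x2 x3 u1 u2 u3 : x1 != x2 -> x1 != x3 -> x2 != x3 ->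
  exists es, rainbow_tree LP col [set (x1, u1); (x2, u2); (x3, u3)] es.
Proof.
move=> x12 x13 x23.
have [z [l1 [l2 [l3 [[l1_path l2_path l3_path] [l1_last l2_last l3_last] Ul Ucol]]]]] :=
  rx3_spider gsym cG_col cG_rx3 x12 x13 x23.
have : uniq ((([:: z] ++ l1) ++ l2) ++ l3) by rewrite -!catA.
rewrite cat_uniq => /and3P[+ l3_fresh Ul3]; rewrite cat_uniq => /and3P[+ l2_fresh Ul2].
rewrite cat_uniq => /and3P[_ l1_fresh Ul1].
pose al := if l1 == [::] then u1 else if l2 == [::] then u2 else u3.
have [be al_be] := h_nb al.
have alNbe : al != be by apply: contraTneq al_be => ->; rewrite hirr.
have be_rb : rainbow_path h cH al be [:: be] by split; rewrite /= ?al_be ?inE ?alNbe.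
have [F_tree _ be_span F_edges F_colors] := fiber_path_tree z alNbe be_rb.
have F_fst : {in rooted_span (fiber_edges z al [:: be]) (z, al), forall v, v.1 \in [:: z]}.
  by move=> v; rewrite fiber_edges_span mem_seq1 => /andP[].
have [L1 [tree1 edges1 colors1 span1 foot1]] :=
  attach_zigzag u1 alNbe F_tree be_span F_fst l1_path Ul1 l1_fresh.
have [L2 [tree2 edges2 colors2 span2 foot2]] :=
  attach_zigzag u2 alNbe tree1 (rooted_span_catl _ be_span) span1 l2_path Ul2 l2_fresh.
have [L3 [tree3 edges3 colors3 _ foot3]] := attach_zigzag u3 alNbe tree2
  (rooted_span_catl _ (rooted_span_catl _ be_span)) span2 l3_path Ul3 l3_fresh.
set es := ((fiber_edges z al [:: be] ++ L1) ++ L2) ++ L3 in tree3 foot3.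
have foot l u : (l = [::] -> u = al) ->
    (l != [::] -> (last z l, u) \in rooted_span es (z, al)) ->
    (last z l, u) \in rooted_span es (z, al).
  by case: l => [/(_ erefl) -> _ | y l _ /(_ isT)] //=; apply: rooted_span_root.
exists es; apply: (rooted_tree_rainbow (r := (z, al))) => //.
- by rewrite /es !all_cat F_edges edges1 edges2 edges3.
- rewrite /es !map_cat F_colors colors1 colors2 colors3 -!catA.
  apply: uniq_shifted_cat => //.
  by rewrite !all_cat !(path_colors_lt cG_col).
- apply: set3_subset; rewrite -?l1_last -?l2_last -?l3_last; apply: foot => //.
  + by rewrite /al => ->.
  + by move=> l1_nil; apply/rooted_span_catl/rooted_span_catl/foot1.
  + move=> l2_nil; rewrite /al l2_nil; case: eqP => // l1_nil.
    by move: x12; rewrite -l1_last -l2_last l1_nil l2_nil eqxx.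
  + by move=> l2_nil; apply/rooted_span_catl/foot2.
  + move=> l3_nil; rewrite /al; case: eqP => [l1_nil|_].
      by move: x13; rewrite -l1_last -l3_last l1_nil l3_nil eqxx.
    case: eqP => // l2_nil.
    by move: x23; rewrite -l2_last -l3_last l2_nil l3_nil eqxx.
Qed.

End LexTrees.

Lemma connected_neighbor (V : finType) (e : rel V) : irreflexive e ->
  connected_graph e -> 1 < #|V| -> forall x, exists y, e x y.
Proof.
move=> eirr e_conn /card_gt1P[u [v [_ _ uv]]] x.
have [w wx] : exists w, w != x.
  by case: (eqVneq u x) => [ux|]; [exists v; rewrite -ux eq_sym | exists u].
have /connectP[[|y p] /= xp wE] := e_conn x w; first by rewrite wE eqxx in wx.
by exists y; case/andP: xp.
Qed.

Lemma lex_rainbow_3_connecting (T U : finType) (g : rel T) (h : rel U) a b :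
  simple_graph g -> simple_graph h -> connected_graph g -> connected_graph h ->
  2 < #|T| -> 1 < #|U| -> rainbow_3_connecting g a -> rainbow_connecting h b ->
  rainbow_3_connecting (lexprod g h) (a + b).
Proof.
move=> [gsym girr] [_ hirr] g_conn h_conn T_gt2 U_gt1 g_rx3 [cH [cH_col h_rc]].
have a_gt1 := rx3_gt1 T_gt2 g_rx3; case: g_rx3 => cG [cG_col cG_rx3].
have g_nb := connected_neighbor girr g_conn (ltnW T_gt2).
have h_nb := connected_neighbor hirr h_conn U_gt1.
have one := one_fiber_tree gsym girr a_gt1 cG_col h_rc g_nb.
have two := two_fiber_tree gsym girr hirr T_gt2 cG_col cG_rx3 h_rc h_nb.
have three := three_fiber_tree cH gsym girr hirr cG_col cG_rx3 h_nb.
exists (lex_color a cG cH); split; first exact: lex_color_edge_coloring.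
move=> S /set3_enum[[x1 u1] [[x2 u2] [[x3 u3] [n12 n13 n23 ->]]]].
rewrite !xpair_eqE in n12 n13 n23.
have [e12|x12] := eqVneq x1 x2; have [e13|x13] := eqVneq x1 x3.
- by subst x2 x3; rewrite eqxx /= in n12 n13 n23; apply: one.
- by subst x2; rewrite eqxx /= in n12; apply: two.
- subst x3; rewrite eqxx /= in n13.
  have [es es_tree] := two x1 x2 u1 u3 u2 x12 n13; exists es.
  by apply: rainbow_tree_subset es_tree; apply: set3_subset; rewrite !inE eqxx ?orbT.
have [e23|x23] := eqVneq x2 x3; last exact: three.
subst x3; rewrite eqxx /= in n23.
rewrite eq_sym in x12; have [es es_tree] := two x2 x1 u2 u3 u1 x12 n23; exists es.
by apply: rainbow_tree_subset es_tree; apply: set3_subset; rewrite !inE eqxx ?orbT.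
Qed.

Section LowerBound.
Variables (T U : finType) (g : rel T) (h : rel U).
Hypothesis gsym : symmetric g.
Hypothesis hsym : symmetric h.

Lemma lexprod_sym : symmetric (lexprod g h).
Proof. by move=> [x u] [y v]; rewrite /lexprod /= gsym hsym eq_sym. Qed.

(* Projecting a walk of G[H] to G gives a walk of G that is no longer, so a
   walk of G[H] between the fibres over x and y is at least as long as the
   distance from x to y. *)
Lemma lex_walk_long d x y (s : T * U) q :
  (forall p, path g x p -> last x p = y -> d <= size p) ->
  s.1 = x -> path (lexprod g h) s q -> (last s q).1 = y -> d <= size q.
Proof.
move=> dist_xy sx sq sqy.
have [w [sw sw_last w_size]] : exists w,
    [/\ path g s.1 w, last s.1 w = (last s q).1 & size w <= size q].
  elim: q s {sx sqy} sq => [|v q IH] s /=; first by exists [::].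
  case/andP=> sv vq; have [w [vw vw_last w_size]] := IH v vq.
  case/orP: sv => [sv | /andP[/eqP sv _]].
    by exists (v.1 :: w); rewrite /= sv vw vw_last.
  by exists w; rewrite sv vw_last; split => //; apply: leqW.
by apply: leq_trans (dist_xy w _ _) w_size; rewrite -sx // sw_last.
Qed.

(* If x and y are at distance at least d in G, a rainbow tree containing
   (x, u), (x, v) and (y, u) has d + 2 vertices on the tree path from (x, u)
   to (y, u) together with (x, v), hence d + 1 edges: rx_3(G[H]) > d. *)
Lemma lex_rx3_gt d x y (u v : U) k : x != y -> u != v ->
  (forall p, path g x p -> last x p = y -> d <= size p) ->
  rainbow_3_connecting (lexprod g h) k -> d < k.
Proof.
move=> xy uv dist_xy [c [c_col c_rx3]].
have [xu_xv xu_yu xv_yu] : [/\ (x, u) != (x, v), (x, u) != (y, u) & (x, v) != (y, u)].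
  by rewrite !xpair_eqE eqxx (negbTE uv) (negbTE xy).
have [es es_tree] := c_rx3 _ (card_set3 xu_xv xu_yu xv_yu).
have size_k := rainbow_tree_size c_col es_tree.
case: es_tree => es_edges _ es_conn size_es sub.
suff tv_d : d.+2 <= #|tree_vertices es|.
  by apply: leq_trans size_k; rewrite size_es ltn_subRL add1n.
have [xuT xvT yuT] : [/\ (x, u) \in tree_vertices es, (x, v) \in tree_vertices es
    & (y, u) \in tree_vertices es] by split; apply: (subsetP sub); rewrite !inE eqxx ?orbT.
have [p [p_walk p_last Up]] := tree_path es_conn xuT yuT.
have p_sub := tree_walk_vertices xuT p_walk.
have p_lex : path (lexprod g h) (x, u) p.
  by apply: sub_path p_walk => ? ? /(tree_rel_edge lexprod_sym es_edges).
have count s : uniq s -> {subset s <= tree_vertices es} -> size s <= #|tree_vertices es|.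
  by move=> Us s_sub; rewrite cardE; apply: uniq_leq_size => // w /s_sub; rewrite mem_enum.
case: (boolP ((x, v) \in p)) => [xv_p | xvNp].
  move: p_lex p_last Up p_sub; case/splitPr: xv_p => p1 p2.
  rewrite cat_path last_cat => /andP[_ /= /andP[_ p2_lex]] p2_last Up p_sub.
  have d_p2 := lex_walk_long dist_xy (erefl : (x, v).1 = x) p2_lex (congr1 fst p2_last).
  apply: leq_trans (count ((x, u) :: p1 ++ (x, v) :: p2) Up p_sub).
  by rewrite /= size_cat /= addnS !ltnS (leq_trans d_p2) ?leq_addl.
have d_p := lex_walk_long dist_xy (erefl : (x, u).1 = x) p_lex (congr1 fst p_last).
have Uvp : uniq ((x, v) :: (x, u) :: p).
  by rewrite cons_uniq Up andbT inE negb_or eq_sym xu_xv.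
apply: leq_trans (count _ Uvp _); first by rewrite /= !ltnS.
by move=> w; rewrite inE => /orP[/eqP-> // | /p_sub].
Qed.

End LowerBound.

Lemma complete_rc (U : finType) (h : rel U) b :
  complete_graph h -> 1 < #|U| -> is_rc h b -> b = 1.
Proof.
move=> h_complete U_gt1 [[c [c_col h_rc]] rc_min].
have [u [v [_ _ uv]]] := card_gt1P U_gt1.
have b_gt0 : 0 < b.
  have [[|w p] [/= uw _ p_last _]] := h_rc u v uv; first by rewrite p_last eqxx in uv.
  by case/andP: uw => /c_col[_ cb] _; apply: leq_ltn_trans cb.
suff : b <= 1 by move: b_gt0; clear; case: b => [|[]].
apply: rc_min; exists (fun _ _ => 0); split => // x y xy.
by exists [:: y]; split; rewrite /= ?h_complete ?inE ?andbT.
Qed.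

Theorem theorem7 (T U : finType) (g : rel T) (h : rel U) :
  simple_graph g -> simple_graph h ->
  connected_graph g -> connected_graph h ->
  2 < #|T| -> 1 < #|U| ->
  ~ (complete_graph g /\ complete_graph h) ->
  (forall a b c, is_rx3 g a -> is_rc h b -> is_rx3 (lexprod g h) c ->
     c <= a + b) /\
  (forall d a b c, is_diam g d -> is_rx3 g a -> d = a -> complete_graph h ->
     is_rc h b -> is_rx3 (lexprod g h) c -> c = a + b).
Proof.
move=> g_simple h_simple g_conn h_conn T_gt2 U_gt1 _.
have upper a b c : is_rx3 g a -> is_rc h b -> is_rx3 (lexprod g h) c -> c <= a + b.
  move=> [g_rx3 _] [h_rc _] [_ c_min]; apply/c_min/lex_rainbow_3_connecting => //.
split=> // d a b c [_ [x [y dist_xy]]] g_rx3 da h_complete h_rc lex_rx3; subst d.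
have b1 := complete_rc h_complete U_gt1 h_rc; subst b.
have xy : x != y.
  apply: contraTneq (rx3_gt1 T_gt2 g_rx3.1) => xy.
  by have := dist_xy [::] isT xy; rewrite leqn0 => /eqP->.
have [u [v [_ _ uv]]] := card_gt1P U_gt1.
have d_lt_c := lex_rx3_gt (proj1 g_simple) (proj1 h_simple) xy uv dist_xy lex_rx3.1.
by apply/eqP; rewrite eqn_leq upper //= addn1.
Qed.
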